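(* Let $(A,\mathit{Con},\mid\!\sim)$ be a cumulative nonmonotonic system and $(B,\mathit{Con}^*,\Delta)$ the normal default structure constructed from it as described in the context. Then every $P\in\mathit{Con}$ has a unique extension in $(B,\mathit{Con}^*,\Delta)$, namely $$\delta(P):=\widetilde{P}\cup\{[Q]\mid Q\in\mathit{Con},\ Q\subseteq\widetilde{P},\ \widetilde{Q}=\widetilde{P}\}.$$
   Context: An abstract nonmonotonic system is a triple $(A,\mathit{Con},\mid\!\sim)$ where $\mathit{Con}$ is a collection of finite subsets of $A$ and $\mid\!\sim\ \subseteq\mathit{Con}\times\mathit{Con}$, satisfying: (1) $X\subseteq Y\in\mathit{Con}\Rightarrow X\in\mathit{Con}$; (2) $a\in A\Rightarrow\{a\}\in\mathit{Con}$; (3) $X\mid\!\sim T\Rightarrow X\cup T\in\mathit{Con}$; (4) $Y\subseteq X\Rightarrow X\mid\!\sim Y$; (5) $X\mid\!\sim T$ and $T\cup X\mid\!\sim Y$ imply $X\mid\!\sim Y$; (6) $X\mid\!\sim Y$ and $X\mid\!\sim Z$ imply $X\mid\!\sim Y\cup Z$. It is cumulative if it also satisfies cautious monotony: $X\mid\!\sim\{a\}$ and $X\mid\!\sim\{b\}$ imply $X\cup\{a\}\mid\!\sim\{b\}$. For $X\in\mathit{Con}$, $\widetilde{X}:=\{t\in A\mid X\mid\!\sim\{t\}\}$. Construction: $B:=A\cup\{[X]\mid X\in\mathit{Con}\}$, where $[X]$ are new pairwise distinct tokens. $\Delta:=\{\frac{X:[X]}{[X]}\mid X\in\mathit{Con}\}\cup\{\frac{\{[X]\}:a}{a}\mid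 X\in\mathit{Con},\ a\in\widetilde{X}\setminus X\}$. For finite $W\subseteq B$, $W\in\mathit{Con}^*$ iff (i) $W\cap A\in\mathit{Con}$; (ii) for every pair of tokens $[X],[Y]\in W$, $\widetilde{X}=\widetilde{Y}$; (iii) if $[X]\in W$ then $X\mid\!\sim W\cap A$. An arbitrary subset of $B$ is consistent if all its finite subsets are in $\mathit{Con}^*$. Extensions in $(B,\mathit{Con}^*,\Delta)$: for consistent $x\subseteq B$ and $S\subseteq B$, $\phi(x,S,0)=x$, $\phi(x,S,i+1)=\phi(x,S,i)\cup\{a\mid\frac{X:a}{a}\in\Delta,\ X\subseteq\phi(x,S,i),\ \{a\}\cup S\text{ consistent}\}$, $\Phi(x,S)=\bigcup_i\phi(x,S,i)$; $y$ is an extension of $x$ if $\Phi(x,y)=y$. *)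

From HB Require Import structures.
From mathcomp Require Import all_boot.
From mathcomp Require Import finmap.

Set Implicit Arguments.
Unset Strict Implicit.
Unset Printing Implicit Defensive.

Local Open Scope fset_scope.

Record NMS (A : choiceType) := {
  Con : {fset A} -> Prop;
  ent : {fset A} -> {fset A} -> Prop;
  ent_Con : forall X Y, ent X Y -> Con X /\ Con Y;
  Con_sub : forall X Y, X `<=` Y -> Con Y -> Con X;
  Con_single : forall a, Con [fset a];
  ent_Con_union : forall X T, ent X T -> Con (X `|` T);
  ent_refl : forall X Y, Con X -> Y `<=` X -> ent X Y;
  ent_cut : forall X T Y, ent X T -> ent (T `|` X) Y -> ent X Y;
  ent_and : forall X Y Z, ent X Y -> ent X Z -> ent X (Y `|` Z)
}.

Section Defs.
Variables (A : choiceType) (N : NMS A).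

Definition cumulative : Prop :=
  forall X a b, ent N X [fset a] -> ent N X [fset b] -> ent N (X `|` [fset a]) [fset b].

Definition tilde (X : {fset A}) (t : A) : Prop := ent N X [fset t].

(* The carrier of B: inl a is a in A, inr X is the new token [X]
   (only tokens with Con X belong to B). *)
Definition Btype : choiceType := (A + {fset A})%type.

Definition inB (b : Btype) : Prop :=
  match b with inl _ => True | inr X => Con N X end.

Definition getl (b : Btype) : option A :=
  match b with inl a => Some a | inr _ => None end.

Definition partA (W : {fset Btype}) : {fset A} := [fset a in pmap getl W].

Definition ConStar (W : {fset Btype}) : Prop :=
  (forall b, b \in W -> inB b) /\
  Con N (partA W) /\
  (forall X Y, inr X \in W -> inr Y \in W -> forall t, tilde X t <-> tilde Y t) /\
  (forall X, inr X \in W -> ent N X (partA W)).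

Definition consistent (x : Btype -> Prop) : Prop :=
  forall W : {fset Btype}, (forall b, b \in W -> x b) -> ConStar W.

(* Delta: normal defaults  Pre : c / c,  given as (prerequisite, conclusion) *)
Definition Delta (Pre : {fset Btype}) (c : Btype) : Prop :=
  (exists X, Con N X /\ Pre = [fset inl x | x in X] /\ c = inr X) \/
  (exists X a, Con N X /\ tilde X a /\ a \notin X /\ Pre = [fset inr X] /\ c = inl a).

Fixpoint phi (x S : Btype -> Prop) (i : nat) : Btype -> Prop :=
  match i with
  | 0 => x
  | i.+1 => fun b => phi x S i b \/
      exists Pre, Delta Pre b /\ (forall p, p \in Pre -> phi x S i p) /\
                  consistent (fun z => z = b \/ S z)
  end.

Definition Phi (x S : Btype -> Prop) (b : Btype) : Prop := exists i, phi x S i b.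

Definition extension (x y : Btype -> Prop) : Prop := forall b, Phi x y b <-> y b.

Definition embA (P : {fset A}) (b : Btype) : Prop :=
  match b with inl a => a \in P | inr _ => False end.

Definition delta (P : {fset A}) (b : Btype) : Prop :=
  match b with
  | inl a => tilde P a
  | inr Q => Con N Q /\ (forall q, q \in Q -> tilde P q) /\
             (forall t, tilde Q t <-> tilde P t)
  end.

End Defs.

From mathcomp Require Import all_boot.
From mathcomp Require Import finmap.

(* δ(P) is consistent: its A-part is entailed by P and all its tokens [Q]
   satisfy Q~ = P~.  Starting from P, the defaults fire [P], then every
   a ∈ P~, then every [Q] of δ(P), so δ(P) ⊆ Φ(P, S) as soon as S ⊆ δ(P).
   Conversely, if S ⊇ P, each round of Φ(P, S) stays inside δ(P): a token [X]
   is only added once X ⊆ P~, i.e. P |~ X, and its consistency with P forces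
   X |~ P; by cumulativity (reciprocity) X~ = P~.  Hence any extension y of P
   satisfies y = Φ(P, y) ⊆ δ(P), and then δ(P) ⊆ Φ(P, y) = y. *)

Set Implicit Arguments.
Unset Strict Implicit.
Unset Printing Implicit Defensive.
Local Open Scope fset_scope.

Section Entailment.
Variables (A : choiceType) (N : NMS A).

Lemma ent_subr X T T' : ent N X T -> T' `<=` T -> ent N X T'.
Proof.
move=> XT sub; apply: (ent_cut XT); apply: ent_refl.
  by rewrite fsetUC; apply: ent_Con_union.
exact: fsubset_trans sub (fsubsetUl _ _).
Qed.

Lemma ent_fset1 X T t : ent N X T -> t \in T -> ent N X [fset t].
Proof. by move=> XT tT; apply: (ent_subr XT); rewrite fsub1set. Qed.

Lemma tilde_refl X t : Con N X -> t \in X -> tilde N X t.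
Proof. by move=> CX tX; apply: ent_refl => //; rewrite fsub1set. Qed.

Lemma ent_of_tilde X T :
  Con N X -> (forall t, t \in T -> tilde N X t) -> ent N X T.
Proof.
move=> CX; elim/fset1U_rect: T => [|x T _ IH] XT.
  by apply: ent_refl => //; apply: fsub0set.
apply: ent_and; first by apply: XT; rewrite fset1U1.
by apply: IH => t tT; apply: XT; rewrite in_fsetU tT orbT.
Qed.

Hypothesis cum : cumulative N.

Lemma cumulativeU X T b : ent N X T -> tilde N X b -> tilde N (X `|` T) b.
Proof.
elim/fset1U_rect: T b => [|x T _ IH] b XT Xb; first by rewrite fsetU0.
have XT' : ent N X T by apply: (ent_subr XT); apply: fsubsetUr.
have Xx : tilde N X x by apply: (ent_fset1 XT); rewrite fset1U1.
by rewrite fsetUA fsetUAC; apply: cum; apply: IH.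
Qed.

Lemma tilde_reciprocity X Y t :
  ent N X Y -> ent N Y X -> tilde N X t -> tilde N Y t.
Proof. by move=> XY YX Xt; apply: (ent_cut YX); apply: cumulativeU. Qed.

End Entailment.

Section DefaultStructure.
Variables (A : choiceType) (N : NMS A).

Lemma in_partA (W : {fset Btype A}) a : (a \in partA W) = (inl a \in W).
Proof.
rewrite /partA in_fset /= mem_pmap.
apply/mapP/idP => [[[a' | //] aW [->]] // | aW].
by exists (inl a).
Qed.

Lemma consistent_sub (x y : Btype A -> Prop) :
  consistent N y -> (forall b, x b -> y b) -> consistent N x.
Proof. by move=> cy xy W Wx; apply: cy => b /Wx /xy. Qed.

Lemma phi_monotone x S i j b : i <= j -> phi N x S i b -> phi N x S j b.
Proof.
elim: j => [|j IH]; first by rewrite leqn0 => /eqP ->.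
by rewrite leq_eqVlt => /orP [/eqP -> // | /IH ij /ij]; left.
Qed.

End DefaultStructure.

Section Extension.
Variables (A : choiceType) (N : NMS A) (P : {fset A}).
Hypothesis CP : Con N P.

Lemma embA_sub_delta b : embA P b -> delta N P b.
Proof. by case: b => //= a; apply: tilde_refl. Qed.

Lemma delta_consistent : consistent N (delta N P).
Proof.
move=> W Wd.
have WA t : t \in partA W -> tilde N P t by rewrite in_partA => /Wd.
split; [|split; [|split]].
- by move=> [a | X] /Wd //= [].
- apply: (@Con_sub _ N _ (P `|` partA W)); first exact: fsubsetUr.
  by apply: ent_Con_union; apply: ent_of_tilde.
- by move=> X Y /Wd [_ [_ XP]] /Wd [_ [_ YP]] t; rewrite XP YP.
- move=> X /Wd [CX [_ XP]]; apply: ent_of_tilde => // t /WA.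
  by move/XP.
Qed.

Lemma delta_sub_Phi S : (forall b, S b -> delta N P b) ->
  forall b, delta N P b -> Phi N (embA P) S b.
Proof.
move=> Sd.
have cons b : delta N P b -> consistent N (fun z => z = b \/ S z).
  by move=> db; apply: (consistent_sub delta_consistent) => z [-> | /Sd].
have dP : delta N P (inr P) by split=> //; split=> // q; apply: tilde_refl.
have phi1P : phi N (embA P) S 1 (inr P).
  right; exists [fset inl x | x in P]; split; first by left; exists P.
  split; last exact: cons.
  by move=> p /imfsetP [x /= xP ->].
have phi2 a : tilde N P a -> phi N (embA P) S 2 (inl a).
  move=> Pa; case: (boolP (a \in P)) => aP; first exact: (phi_monotone (i := 0)).
  right; exists [fset inr P]; split; first by right; exists P, a.
  split; last exact: cons.
  by move=> p; rewrite in_fset1 => /eqP ->.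
move=> [a | Q] db; first by exists 2; apply: phi2.
exists 3; right; exists [fset inl x | x in Q]; split.
  by left; exists Q; case: db.
split; last exact: cons.
move=> p /imfsetP [x /= xQ ->]; apply: phi2.
by case: db => _ [] /(_ _ xQ).
Qed.

Lemma ent_token_of_consistent S X :
  (forall b, embA P b -> S b) -> consistent N (fun z => z = inr X \/ S z) ->
  ent N X P.
Proof.
move=> PS cons.
pose W := inr X |` [fset inl x | x in P].
have [_ [_ [_ Wtok]]] : ConStar N W.
  apply: cons => z; rewrite in_fsetU in_fset1.
  case/orP => [/eqP -> | /imfsetP [x /= xP ->]]; first by left.
  by right; apply: PS.
apply: (ent_subr (Wtok X (fset1U1 _ _))); apply/fsubsetP => p pP.
by rewrite in_partA in_fsetU; apply/orP; right; apply/imfsetP; exists p.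
Qed.

Hypothesis cum : cumulative N.

Lemma phi_sub_delta S : (forall b, embA P b -> S b) ->
  forall i b, phi N (embA P) S i b -> delta N P b.
Proof.
move=> PS; elim => [|i IH] b; first exact: embA_sub_delta.
case=> [/IH // | [Pre [Delta_Pre [Pre_phi cons]]]].
case: Delta_Pre => [[X [CX [EPre Eb]]] | [X [a [_ [Xa [_ [EPre Eb]]]]]]];
  subst Pre b.
- have XP q : q \in X -> tilde N P q.
    by move=> qX; apply: (IH (inl q)); apply: Pre_phi; apply/imfsetP; exists q.
  have PX : ent N P X by apply: ent_of_tilde.
  have XP' := ent_token_of_consistent PS cons.
  split=> //; split=> // t; split; exact: tilde_reciprocity.
- have [_ [_ XP]] := IH (inr X) (Pre_phi _ (fset11 _)).
  by apply/XP.
Qed.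

End Extension.

Theorem lemma6 (A : choiceType) (N : NMS A) :
  cumulative N ->
  forall P : {fset A}, Con N P ->
    extension N (embA P) (delta N P) /\
    (forall y : Btype A -> Prop, extension N (embA P) y ->
       forall b, y b <-> delta N P b).
Proof.
move=> cum P CP; split.
  move=> b; split; last by apply: delta_sub_Phi.
  by move=> [i]; apply: (phi_sub_delta CP cum (embA_sub_delta CP)).
move=> y ext_y.
have Py b : embA P b -> y b by move=> Pb; apply/ext_y; exists 0.
have yd b : y b -> delta N P b.
  by move=> /ext_y [i]; apply: (phi_sub_delta CP cum Py).
move=> b; split; first exact: yd.
by move=> db; apply/ext_y; apply: (delta_sub_Phi CP yd).
Qed.
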